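(* Any linear automorphism ${\bf A}$ of $L_{1,3}$ is a scalar multiple of a signed permutation induced by a vertex relabeling, i.e., ${\bf A}=c\,{\bf S}{\bf P}$ with $c\in\mathbb C\setminus\{0\}$, ${\bf S}$ a $3\times3$ diagonal matrix with entries $\pm1$, and ${\bf P}$ a permutation matrix sending $e_{\{i,j\}}$ to $e_{\{\sigma(i),\sigma(j)\}}$ for some permutation $\sigma$ of $\{1,2,3\}$.
   Context: Coordinates of $\mathbb C^3$ are indexed by the edges $\{1,2\},\{1,3\},\{2,3\}$. For complex numbers ${\bf p}_1,{\bf p}_2,{\bf p}_3$, $m({\bf p})$ has coordinates $m_{ij}=({\bf p}_i-{\bf p}_j)^2$; $M_{1,3}$ is the image of $m$, and $L_{1,3}=\{l\in\mathbb C^3:(l_{12}^2,l_{13}^2,l_{23}^2)\in M_{1,3}\}$. A linear automorphism of $L_{1,3}$ is a non-singular $3\times 3$ complex matrix mapping $L_{1,3}$ bijectively onto itself. *)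

From mathcomp Require Import all_boot all_order all_algebra all_fingroup.
From mathcomp Require Import complex Rstruct.
From Stdlib Require Import Reals.
Set Implicit Arguments. Unset Strict Implicit. Unset Printing Implicit Defensive.
Import Order.TTheory GRing.Theory Num.Theory.
Local Open Scope ring_scope.

Definition C := Rdefinitions.R[i].

(* Vertices {1,2,3} are 'I_3 = {0,1,2}; coordinates of C^3 ('cV[C]_3) are
   indexed by edges: index 0 = {1,2}, index 1 = {1,3}, index 2 = {2,3}. *)
Definition edge_verts (e : 'I_3) : 'I_3 * 'I_3 :=
  match val e with
  | 0%N => (inord 0, inord 1)
  | 1%N => (inord 0, inord 2)
  | _ => (inord 1, inord 2)
  end.

Definition edge_set (e : 'I_3) : {set 'I_3} :=
  [set (edge_verts e).1; (edge_verts e).2].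

Definition mmap (p : 'I_3 -> C) : 'cV[C]_3 :=
  \col_e ((p (edge_verts e).1 - p (edge_verts e).2) ^+ 2).

Definition M13 (x : 'cV[C]_3) : Prop := exists p : 'I_3 -> C, x = mmap p.

Definition L13 (l : 'cV[C]_3) : Prop := M13 (\col_e (l e 0 ^+ 2)).

Definition lin_aut_L13 (A : 'M[C]_3) : Prop :=
  A \in unitmx /\
  (forall l, L13 l -> L13 (A *m l)) /\
  (forall l', L13 l' -> exists l, L13 l /\ A *m l = l').

Definition edge_perm_mx (s : 'S_3) : 'M[C]_3 :=
  \matrix_(e, f) ((edge_set e == [set s x | x in edge_set f]) : bool)%:R.

Definition sign_diag (S : 'M[C]_3) : Prop :=
  (forall i j : 'I_3, i != j -> S i j = 0) /\
  (forall i : 'I_3, S i i = 1 \/ S i i = -1).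

From mathcomp Require Import all_boot all_order all_algebra all_fingroup.
From mathcomp Require Import complex Rstruct.
From mathcomp Require Import ring.
Import GRing.Theory Num.Theory.

(* L_{1,3} is the union of the four planes [normal k *m l = 0]: the product of
   the four linear forms is minus Heron's polynomial in the squared coordinates,
   which vanishes on the squared distances of three points of a line, and
   conversely a point of such a plane is realised by three points of C.
   A line not contained in one of the four planes meets their union in at most
   four points, so a linear map preserving L_{1,3} sends each plane into one of
   them; dually, A pulls each normal back to a multiple of a normal.  The only
   linear relation among the normals is their sum, so these multiples are one
   and the same c and the normals are permuted.  Each coordinate vector is half
   the sum of two normals, hence each row of A is c times a signed coordinate
   vector.  The resulting permutation of the coordinates (edges) is the action
   on the three pairings of the four normals, and it comes from a relabelling
   of the vertices, an edge being determined by its opposite vertex. *)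

Set Implicit Arguments.
Unset Strict Implicit.
Unset Printing Implicit Defensive.
Local Open Scope ring_scope.

Definition o0 : 'I_3 := @Ordinal 3 0 isT.
Definition o1 : 'I_3 := @Ordinal 3 1 isT.
Definition o2 : 'I_3 := @Ordinal 3 2 isT.
Definition q0 : 'I_4 := @Ordinal 4 0 isT.
Definition q1 : 'I_4 := @Ordinal 4 1 isT.
Definition q2 : 'I_4 := @Ordinal 4 2 isT.
Definition q3 : 'I_4 := @Ordinal 4 3 isT.

Lemma ord3_ind (P : 'I_3 -> Prop) : P o0 -> P o1 -> P o2 -> forall i, P i.
Proof.
by move=> P0 P1 P2 [[|[|[|i]]] lti] //; rewrite (bool_irrelevance lti isT).
Qed.

Lemma ord4_ind (P : 'I_4 -> Prop) : P q0 -> P q1 -> P q2 -> P q3 -> forall i, P i.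
Proof.
by move=> P0 P1 P2 P3 [[|[|[|[|i]]]] lti] //; rewrite (bool_irrelevance lti isT).
Qed.

Lemma big_ord3 (R : Type) (idx : R) (op : Monoid.law idx) (F : 'I_3 -> R) :
  \big[op/idx]_(i < 3) F i = op (op (F o0) (F o1)) (F o2).
Proof.
rewrite !big_ord_recr big_ord0 Monoid.mul1m.
by congr (op (op (F _) (F _)) (F _)); exact: val_inj.
Qed.

Lemma big_ord4 (R : Type) (idx : R) (op : Monoid.law idx) (F : 'I_4 -> R) :
  \big[op/idx]_(i < 4) F i = op (op (op (F q0) (F q1)) (F q2)) (F q3).
Proof.
rewrite !big_ord_recr big_ord0 Monoid.mul1m.
by congr (op (op (op (F _) (F _)) (F _)) (F _)); exact: val_inj.
Qed.

Lemma pencil_in_hyperplanes (F : numFieldType) (I : finType) n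
    (r : I -> 'rV[F]_n) (u w : 'cV[F]_n) :
  (forall t : nat, exists i, r i *m (u + t%:R *: w) = 0) ->
  exists i, r i *m u = 0 /\ r i *m w = 0.
Proof.
move=> hit; have [g hg] := fin_all_exists (fun t : 'I_#|I|.+1 => hit t).
have /injectivePn[t1 [t2 neq_t12 eq_g]] : ~~ injectiveb g.
  by apply/injectiveP => /leq_card; rewrite card_ord ltnn.
have expand t : r (g t2) *m (u + t%:R *: w) = r (g t2) *m u + t%:R *: (r (g t2) *m w).
  by rewrite mulmxDr scalemxAr.
have := hg t1; have := hg t2; rewrite eq_g !expand => h2 h1.
have rw0 : r (g t2) *m w = 0.
  have : (t1%:R - t2%:R : F) *: (r (g t2) *m w) == 0.
    by rewrite scalerBl subr_eq0 -(inj_eq (addrI (r (g t2) *m u))) h1 h2.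
  rewrite scalemx_eq0 subr_eq0 eqr_nat => /orP[/eqP/val_inj eq_t12|/eqP //].
  by rewrite eq_t12 eqxx in neq_t12.
by exists (g t2); rewrite -[RHS]h2 rw0 scaler0 addr0.
Qed.

Lemma mx11_eq0 (R : nmodType) (M : 'M[R]_1) : M = 0 <-> M 0 0 = 0.
Proof.
by split=> [-> | M00]; [rewrite mxE | apply/matrixP => i j; rewrite !ord1 M00 mxE].
Qed.

Definition kernel_vec (R : pzRingType) m (n : 'rV[R]_m) (j j' : 'I_m) : 'cV[R]_m :=
  n 0 j' *: delta_mx j 0 - n 0 j *: delta_mx j' 0.

Lemma mul_kernel_vec (R : comPzRingType) m (r n : 'rV[R]_m) j j' :
  (r *m kernel_vec n j j') 0 0 = n 0 j' * r 0 j - n 0 j * r 0 j'.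
Proof. by rewrite mulmxBr -!scalemxAr -!colE !mxE. Qed.

Lemma kernel_vecP (R : comPzRingType) m (n : 'rV[R]_m) j j' :
  n *m kernel_vec n j j' = 0.
Proof. by apply/mx11_eq0; rewrite mul_kernel_vec mulrC subrr. Qed.

Lemma kernel_vec_annihilator (F : fieldType) m (n r : 'rV[F]_m) j0 :
  n 0 j0 != 0 -> (forall j, r *m kernel_vec n j0 j = 0) ->
  r = (r 0 j0 / n 0 j0) *: n.
Proof.
move=> nj0 kill; apply/rowP => j; rewrite mxE.
have /mx11_eq0 := kill j; rewrite mul_kernel_vec => /eqP; rewrite subr_eq0 => /eqP e.
by rewrite -[r 0 j](mulKf nj0) -e; field.
Qed.

Lemma monomial_rows_mx (R : comPzRingType) n (A : 'M[R]_n) (d : 'rV[R]_n) (s : 'S_n) :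
  (forall i, row i A = d 0 i *: delta_mx 0 (s i)) -> A = diag_mx d *m perm_mx s.
Proof.
move=> rowA; apply/matrixP => i j; have /rowP/(_ j) := rowA i.
by rewrite mul_diag_mx !mxE => ->; rewrite eqxx eq_sym mulr_natr.
Qed.

Lemma mulmx_row_col3 (R : comPzRingType) (r : 'rV[R]_3) (x : 'cV[R]_3) :
  (r *m x) 0 0 = r 0 o0 * x o0 0 + r 0 o1 * x o1 0 + r 0 o2 * x o2 0.
Proof. by rewrite mxE big_ord3. Qed.

(* Sixteen times the squared area of a triangle with squared sides d12, d13, d23. *)
Definition heron (R : comPzRingType) (d12 d13 d23 : R) : R :=
  2 * (d12 * d13 + d13 * d23 + d23 * d12) - (d12 ^+ 2 + d13 ^+ 2 + d23 ^+ 2).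

Lemma heron_collinear (R : comPzRingType) (a b c : R) :
  heron ((a - b) ^+ 2) ((a - c) ^+ 2) ((b - c) ^+ 2) = 0.
Proof. rewrite /heron; ring. Qed.

(* (-1,-1,-1), (1,1,-1), (1,-1,1) and (-1,1,1). *)
Definition normal (k : 'I_4) : 'rV[C]_3 :=
  \row_i (if (k == 0 :> nat) || (k + i == 3)%N then -1 else 1).

Lemma normal_sign k i : normal k 0 i = 1 \/ normal k 0 i = -1.
Proof. by rewrite mxE; case: ifP; [right | left]. Qed.

Lemma normal_sqr k i : normal k 0 i ^+ 2 = 1.
Proof. by case: (normal_sign k i) => ->; rewrite ?sqrrN expr1n. Qed.

Lemma normal_neq0 k i : normal k 0 i != 0.
Proof. by case: (normal_sign k i) => ->; rewrite ?oppr_eq0 oner_eq0. Qed.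

Lemma prod_normal_forms (x : 'cV[C]_3) :
  \prod_k (normal k *m x) 0 0 = - heron (x o0 0 ^+ 2) (x o1 0 ^+ 2) (x o2 0 ^+ 2).
Proof. rewrite big_ord4 !mulmx_row_col3 !mxE /= /heron; ring. Qed.

Lemma sign_plane_L13 (n : 'rV[C]_3) (x : 'cV[C]_3) :
  (forall i, n 0 i ^+ 2 = 1) -> n *m x = 0 -> L13 x.
Proof.
move=> n_sqr /mx11_eq0; rewrite mulmx_row_col3 => /eqP; rewrite addr_eq0 => /eqP plane.
have sqr_n i y : (n 0 i * y) ^+ 2 = y ^+ 2 by rewrite exprMn n_sqr mul1r.
exists (fun v => [:: 0; - (n 0 o0 * x o0 0); n 0 o1 * x o1 0]`_v).
apply/matrixP => e j; rewrite ord1 {j}; elim/ord3_ind: e; rewrite !mxE /= !inordK //=.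
- by rewrite sub0r opprK sqr_n.
- by rewrite sub0r sqrrN sqr_n.
- by rewrite -opprD plane opprK sqr_n.
Qed.

Lemma L13_normalP (x : 'cV[C]_3) : L13 x <-> exists k, normal k *m x = 0.
Proof.
split.
  case=> p /matrixP sq.
  have sqE i : x i 0 ^+ 2 = mmap p i 0 by rewrite -sq mxE.
  have /eqP : \prod_k (normal k *m x) 0 0 = 0.
    by rewrite prod_normal_forms !sqE !mxE heron_collinear oppr0.
  by case/prodf_eq0 => k _ /eqP /mx11_eq0; exists k.
by case=> k; apply: sign_plane_L13; exact: normal_sqr.
Qed.

Lemma L13_stable_plane (A : 'M[C]_3) k (u w : 'cV[C]_3) :
    (forall l, L13 l -> L13 (A *m l)) -> normal k *m u = 0 -> normal k *m w = 0 ->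
  exists j, normal j *m A *m u = 0 /\ normal j *m A *m w = 0.
Proof.
move=> stableA nu nw; apply: pencil_in_hyperplanes => t.
have /stableA/L13_normalP[j hj] : L13 (u + t%:R *: w).
  by apply/L13_normalP; exists k; rewrite mulmxDr -scalemxAr nu nw scaler0 addr0.
by exists j; rewrite -mulmxA.
Qed.

Lemma L13_stable_normal (A : 'M[C]_3) : (forall l, L13 l -> L13 (A *m l)) ->
  forall k, exists j (a : C), normal j *m A = a *: normal k.
Proof.
move=> stableA k.
have [j [ju jw]] := L13_stable_plane stableA (kernel_vecP (normal k) o0 o1)
  (kernel_vecP (normal k) o0 o2).
exists j, ((normal j *m A) 0 o0 / normal k 0 o0).
apply: kernel_vec_annihilator (normal_neq0 k o0) _.
by elim/ord3_ind; [rewrite /kernel_vec subrr mulmx0 | exact: ju | exact: jw].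
Qed.

Lemma sum_normal : \sum_k normal k = 0.
Proof. by apply/rowP; elim/ord3_ind; rewrite summxE big_ord4 !mxE /=; ring. Qed.

Lemma eq_of_double (F : numFieldType) (y z : F) : (y - z) *+ 2 = 0 -> y = z.
Proof. by move/eqP; rewrite mulrn_eq0 subr_eq0 => /eqP. Qed.

Lemma normal_relation (a : 'I_4 -> C) :
  \sum_k a k *: normal k = 0 -> forall k, a k = a q0.
Proof.
move/rowP => rel; have := rel o0; have := rel o1; have := rel o2.
rewrite !summxE !big_ord4 !mxE /= => r2 r1 r0.
elim/ord4_ind => //; apply: eq_of_double.
- by have := congr2 +%R r0 r1; rewrite addr0 => <-; ring.
- by have := congr2 +%R r0 r2; rewrite addr0 => <-; ring.
- by have := congr2 +%R r1 r2; rewrite addr0 => <-; ring.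
Qed.

Lemma normal_scale_inj (k k' : 'I_4) (a b : C) :
  a != 0 -> a *: normal k = b *: normal k' -> k = k'.
Proof.
move=> a_neq0 eq_ab; apply/eqP/negPn/negP => neq_kk'.
pose coef j := if j == k then a else if j == k' then - b else 0.
have coef0 j : j != k -> j != k' -> coef j = 0 by rewrite /coef => /negPf-> /negPf->.
have rel : \sum_j coef j *: normal j = 0.
  rewrite (bigD1 k) // (bigD1 k') 1?eq_sym //= big1 => [|j /andP[jk jk']].
    by rewrite /coef eqxx eq_sym (negPf neq_kk') eqxx eq_ab scaleNr addr0 subrr.
  by rewrite coef0 ?scale0r.
have /card_gt0P[j] : (0 < #|~: [set k; k']|)%N.
  by have := cardsC [set k; k']; rewrite cards2 neq_kk' card_ord; case: #|_|.
rewrite !inE negb_or => /andP[jk jk'].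
have := normal_relation rel j; rewrite -(normal_relation rel k) coef0 // /coef eqxx.
by move=> /esym/eqP; apply/negP.
Qed.

Lemma lin_aut_L13_normal_perm (A : 'M[C]_3) : lin_aut_L13 A ->
  exists (rho : 'S_4) (c : C), c != 0 /\ forall k, normal k *m A = c *: normal (rho k).
Proof.
case=> unitA [stableA _].
have [j hj] := fin_all_exists (L13_stable_normal stableA).
have [a ha] := fin_all_exists hj.
have a_neq0 k : a k != 0.
  apply/eqP => a0; have := ha k; rewrite a0 scale0r => /(congr1 (mulmx^~ (invmx A))).
  rewrite mulmxK // mul0mx => /rowP/(_ o0); rewrite [RHS]mxE; exact/eqP/normal_neq0.
have j_inj : injective j.
  by move=> k k' eq_j; apply: normal_scale_inj (a_neq0 k) _; rewrite -!ha eq_j.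
have a_const k : a k = a q0.
  apply: normal_relation; rewrite -(eq_bigr _ (fun k _ => ha k)) -mulmx_suml.
  by rewrite -(reindex_inj j_inj (F := normal) (P := xpredT)) sum_normal mul0mx.
exists (perm j_inj)^-1%g, (a q0); split => // k.
by rewrite -{1}[k](permKV (perm j_inj)) permE ha a_const.
Qed.

(* Index of the normal whose only negative entry is at coordinate i. *)
Definition flip_at (i : 'I_3) : 'I_4 := lift q0 (rev_ord i).

Lemma normal0_flipD i : normal q0 + normal (flip_at i) = - 2 *: delta_mx 0 i.
Proof. by apply/rowP => j; elim/ord3_ind: i; elim/ord3_ind: j; rewrite !mxE /=; ring. Qed.

(* The coordinate on which [normal k] and [normal k'] agree; the three
   coordinates correspond to the three splittings of the normals into two pairs. *)
Definition agree (k k' : 'I_4) : 'I_3 :=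
  match val k, val k' with
  | 0, 3 | 3, 0 | 1, 2 | 2, 1 => o0
  | 0, 2 | 2, 0 | 1, 3 | 3, 1 => o1
  | _, _ => o2
  end.

Lemma normalD k k' : k != k' ->
  normal k + normal k' = (2 * normal k 0 (agree k k')) *: delta_mx 0 (agree k k').
Proof.
by elim/ord4_ind: k; elim/ord4_ind: k' => // _; apply/rowP;
  elim/ord3_ind; rewrite !mxE /=; ring.
Qed.

Lemma agree_inj a b b' : a != b -> a != b' -> agree a b = agree a b' -> b = b'.
Proof. by elim/ord4_ind: a; elim/ord4_ind: b; elim/ord4_ind: b'. Qed.

Definition pairing_image (rho : 'S_4) (i : 'I_3) : 'I_3 :=
  agree (rho q0) (rho (flip_at i)).

Lemma pairing_image_inj rho : injective (pairing_image rho).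
Proof.
move=> i i' /agree_inj; rewrite !(inj_eq perm_inj) !neq_lift.
by move=> /(_ isT isT) /perm_inj /lift_inj /rev_ord_inj.
Qed.

Lemma row_normal_permuting (A : 'M[C]_3) (rho : 'S_4) (c : C) i :
  (forall k, normal k *m A = c *: normal (rho k)) ->
  row i A = (- c * normal (rho q0) 0 (pairing_image rho i)) *:
              delta_mx 0 (pairing_image rho i).
Proof.
move=> hA; rewrite rowE.
have -> : delta_mx 0 i = (- 2)^-1 *: (normal q0 + normal (flip_at i)).
  by rewrite normal0_flipD scalerA mulVf ?scale1r // oppr_eq0 pnatr_eq0.
rewrite -scalemxAl mulmxDl !hA -scalerDr normalD; last by rewrite (inj_eq perm_inj) neq_lift.
by rewrite !scalerA; congr (_ *: _); field.
Qed.

Lemma edge_setE e : edge_set e = ~: [set rev_ord e].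
Proof.
apply/setP => v; rewrite !inE /edge_set /edge_verts.
by elim/ord3_ind: e; elim/ord3_ind: v; rewrite /= -!val_eqE /= !inordK.
Qed.

Lemma edge_perm_mxE (s : 'S_3) e f :
  edge_perm_mx s e f = (rev_ord e == s (rev_ord f))%:R.
Proof.
have preim1 : (s^-1)%g @^-1: [set rev_ord f] = [set s (rev_ord f)].
  by apply/setP => v; rewrite !inE (canF_eq (permKV s)).
by rewrite mxE !edge_setE -preim_permV preimsetC preim1 (inj_eq (@setC_inj _))
  (inj_eq (@set1_inj _)).
Qed.

Lemma rev_conj_inj (s : 'S_3) : injective (fun i => rev_ord (s (rev_ord i))).
Proof. by move=> i j /rev_ord_inj/perm_inj/rev_ord_inj. Qed.

Definition rev_conj (s : 'S_3) : 'S_3 := perm (@rev_conj_inj s).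

Lemma perm_mx_edge_perm (q : 'S_3) : perm_mx q = edge_perm_mx (rev_conj q^-1).
Proof.
apply/matrixP => e f; rewrite edge_perm_mxE permE rev_ordK (inj_eq rev_ord_inj).
by rewrite !mxE (canF_eq (permK q)).
Qed.

Lemma normal_permuting_mx (A : 'M[C]_3) (rho : 'S_4) (c : C) :
  (forall k, normal k *m A = c *: normal (rho k)) ->
  exists (S : 'M[C]_3) (s : 'S_3), sign_diag S /\ A = c *: (S *m edge_perm_mx s).
Proof.
move=> hA; pose q := perm (@pairing_image_inj rho).
pose d : 'rV[C]_3 := \row_i - normal (rho q0) 0 (q i).
exists (diag_mx d), (rev_conj q^-1); split.
  split=> [i j /negPf neq_ij | i]; first by rewrite mxE neq_ij mulr0n.
  rewrite mxE eqxx mulr1n mxE.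
  by case: (normal_sign (rho q0) (q i)) => ->; [right | left; rewrite opprK].
rewrite -perm_mx_edge_perm scalemxAl -linearZ /=.
apply: monomial_rows_mx => i; rewrite (row_normal_permuting _ hA) permE.
by congr (_ *: _); rewrite [RHS]mxE [d _ _]mxE permE mulrN mulNr.
Qed.

Theorem theorem5p27 (A : 'M[C]_3) :
  lin_aut_L13 A ->
  exists (c : C) (S : 'M[C]_3) (s : 'S_3),
    c != 0 /\ sign_diag S /\ A = c *: (S *m edge_perm_mx s).
Proof.
move=> autA; have [rho [c [c_neq0 hA]]] := lin_aut_L13_normal_perm autA.
have [S [s [signS ->]]] := normal_permuting_mx hA.
by exists c, S, s.
Qed.
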